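(* Let $m>1$ be an odd integer and let $p$ be the greatest prime dividing $m$. Then for every $\epsilon>0$, $$C_m(a)=o\!\left(a^{\log_p\left(\frac{p+1}{2}\right)+\epsilon}\right)\quad (a\to\infty).$$
   Context: For odd $m\in\mathbb{N}$, $C_m(a)=\#\{0\le s<a : m\nmid \binom{2^{s+1}}{2^s}\}$. *)

From Stdlib Require Import Reals.
From Coquelicot Require Import Coquelicot.
From mathcomp Require Import all_boot.

Definition Cm (m a : nat) : nat :=
  count (fun s => ~~ (m %| 'C(2 ^ s.+1, 2 ^ s))%N) (iota 0 a).

Definition gpd (m : nat) : nat := max_pdiv m.

Definition expo (p : nat) : R := Rdiv (ln (Rdiv (Rplus (INR p) R1) (IZR 2))) (ln (INR p)).

From Stdlib Require Import Reals.
From Coquelicot Require Import Coquelicot.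
From mathcomp Require Import all_boot.
Local Open Scope R_scope.

From Stdlib Require Import Lra.
From mathcomp Require Import zify cyclic.
Local Open Scope nat_scope.

(* Fix a prime q | m and write q = 2h + 1.  By Kummer, q^e does not divide
   C(2^(s+1), 2^s) only if doubling 2^s mod q^k in base q gives fewer than e
   carries.  A digit above h forces a carry, so at most (h+1)^k (k+1)^e
   residues r < q^k double with fewer than e carries.  Lifting the exponent
   shows that 2 has order at least q^(k-c) modulo q^k for a constant c, so in
   each of the q windows of q^(k-c) ~ a consecutive exponents s the residues
   2^s mod q^k are distinct.  Hence at most q (h+1)^k (k+1)^e bad s < a, and
   (h+1)^(log_q a) = a^(log_q (h+1)) <= a^(log_p ((p+1)/2)), the last step by
   concavity of t |-> t^al (al = ln q / ln p). *)

(* A carry out of the i lowest base-q digits of n + n occurs iff q^i <= 2 (n mod q^i). *)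
Definition carries q n k := count (fun i => q ^ i <= (n %% q ^ i).*2) (iota 1 k).

Lemma divn_double n d : 0 < d -> n.*2 %/ d = (n %/ d).*2 + (d <= (n %% d).*2).
Proof.
move=> d_gt0; rewrite {1}(divn_eq n d) -!muln2 mulnDl mulnAC divnMDl //.
have lt_rd := ltn_pmod n d_gt0.
have [le_d | lt_d] := leqP d (n %% d * 2); last by rewrite (divn_small lt_d).
rewrite -[n %% d * 2 in LHS](subnKC le_d) divnDl // divnn d_gt0.
by rewrite (divn_small (_ : _ - d < d)) ?addn0 //; lia.
Qed.

Lemma logn_fact_iota q n N : prime q -> n < N ->
  logn q n`! = \sum_(1 <= i < N.+1) n %/ q ^ i.
Proof.
move=> q_pr lt_nN; rewrite logn_fact // [in RHS](big_cat_nat _ (n := n.+1)) //=; last lia.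
rewrite [X in _ = _ + X]big1_seq ?addn0 // => i /andP[_].
rewrite mem_iota => /andP[lt_ni _]; apply/divn_small/(leq_trans lt_ni)/ltnW.
exact/ltn_expl/prime_gt1.
Qed.

Lemma logn_bin_double q n N : prime q -> n.*2 < N ->
  logn q 'C(n.*2, n) = carries q n N.
Proof.
move=> q_pr lt_2nN; have q_gt0 := prime_gt0 q_pr.
have fact_2n := bin_fact (leq_addr n n); rewrite addnK addnn in fact_2n.
have : logn q (n.*2)`! = logn q 'C(n.*2, n) + (logn q n`!).*2.
  by rewrite -fact_2n !lognM ?bin_gt0 ?muln_gt0 ?fact_gt0 ?addnn // -addnn leq_addr.
rewrite !(logn_fact_iota _ _ N) //; last by rewrite -addnn in lt_2nN; lia.
under eq_bigr do rewrite divn_double ?expn_gt0 ?q_gt0 //.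
rewrite (big_morph double doubleD double0) big_split /= addnC => /addIn <-.
rewrite /carries -sum1_count [RHS]big_mkcond /index_iota subn1.
by apply: eq_bigr => i _; case: ifP.
Qed.

Lemma carries_le_logn_bin q n k : prime q -> carries q n k <= logn q 'C(n.*2, n).
Proof.
move=> q_pr; rewrite (logn_bin_double _ _ (k + n.*2.+1)) ?ltn_addl // /carries.
by rewrite iotaD count_cat leq_addr.
Qed.

Lemma carries_mod q n k : 0 < q -> carries q (n %% q ^ k) k = carries q n k.
Proof.
move=> q_gt0; apply: eq_in_count => i; rewrite mem_iota => /andP[_ lt_ik].
by rewrite modn_dvdm // dvdn_exp2l //; lia.
Qed.

Lemma carriesS q n k :
  carries q n k.+1 = carries q n k + (q ^ k.+1 <= (n %% q ^ k.+1).*2).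
Proof. by rewrite /carries -[k.+1]addn1 iotaD count_cat /= add1n addn0 addn1. Qed.

Lemma sub_in_count (T : eqType) (a1 a2 : pred T) s :
  {in s, subpred a1 a2} -> count a1 s <= count a2 s.
Proof.
elim: s => //= x s IH sub_a; rewrite leq_add ?IH //.
  by case: (boolP (a1 x)) => // /(sub_a x (mem_head x s)) ->.
by move=> y s_y; apply: sub_a; rewrite inE s_y orbT.
Qed.

Lemma count_iota_blocks (P : pred nat) D Q :
  count P (iota 0 (D * Q)) = \sum_(d < D) count (fun r => P (d * Q + r)) (iota 0 Q).
Proof.
elim: D => [|D IH]; first by rewrite mul0n big_ord0.
rewrite big_ord_recr /= -IH mulSn addnC iotaD count_cat add0n; congr (_ + _).
by rewrite -{1}[D * Q]addn0 iotaDl count_map.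
Qed.

Section FewCarries.

Variable h : nat.
Let q := h.*2.+1.

Lemma carries_top_digit d r k : d < q -> r < q ^ k ->
  (h < d) + carries q r k <= carries q (d * q ^ k + r) k.+1.
Proof.
move=> lt_dq lt_r; have q_gt0 : 0 < q by [].
rewrite carriesS -[carries q (_ + r) k](carries_mod _ _ _ q_gt0) modnMDl modn_small //.
rewrite addnC leq_add2l.
have [lt_hd|] := ltnP h d; last by [].
have lt_top : d * q ^ k + r < q ^ k.+1 by rewrite expnS; nia.
by rewrite modn_small // expnS /q; nia.
Qed.

Definition few_carries k j := count (fun r => carries q r k < j) (iota 0 (q ^ k)).

Lemma few_carriesS k j :
  few_carries k.+1 j.+1 <= h.+1 * (few_carries k j.+1 + few_carries k j).
Proof.
rewrite [few_carries k.+1 _]/few_carries expnS count_iota_blocks.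
apply: (@leq_trans (\sum_(d < q) if h < d then few_carries k j else few_carries k j.+1)).
  apply: leq_sum => d _; rewrite /few_carries.
  case: ltnP => h_d; apply: sub_in_count => r; rewrite mem_iota add0n => /andP[_ lt_r] /=;
    have := carries_top_digit _ _ _ (ltn_ord d) lt_r; lia.
rewrite -(big_mkord xpredT (fun d => if h < d then _ else _)).
rewrite (big_cat_nat _ (n := h.+1)) //=; last by rewrite /q; lia.
rewrite (eq_big_nat _ _ (F2 := fun _ => few_carries k j.+1)); last first.
  by move=> d /andP[_ lt_dh]; rewrite ltnNge -ltnS lt_dh.
rewrite [X in _ + X](eq_big_nat _ _ (F2 := fun _ => few_carries k j)); last first.
  by move=> d /andP[->].
rewrite !sum_nat_const_nat subn0 (_ : q - h.+1 = h); first nia.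
by rewrite /q; lia.
Qed.

Lemma few_carries_le k j : few_carries k j <= h.+1 ^ k * k.+1 ^ j.
Proof.
elim: k j => [|k IH] [|j]; try by rewrite /few_carries (eq_count (a2 := pred0)) ?count_pred0.
  by rewrite /few_carries expn0 (leq_trans (count_size _ _)) ?size_iota ?exp1n.
have le_pow : k.+1 ^ j <= k.+2 ^ j by case: j {IH} => // j; rewrite leq_exp2r.
apply: leq_trans (few_carriesS k j) _; rewrite [h.+1 ^ _]expnS -mulnA leq_mul2l.
apply/orP; right; apply: leq_trans (leq_add (IH j.+1) (IH j)) _.
by rewrite -mulnDr leq_mul2l [in X in X <= _]expnS addnC -mulSn expnS leq_mul2l le_pow !orbT.
Qed.

End FewCarries.

Lemma geom_sum_mod x n d : x = 1 %[mod d] -> \sum_(i < n) x ^ i = n %[mod d].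
Proof.
move=> x_1; rewrite -modn_summ (eq_bigr (fun=> 1 %% d)) => [|i _]; last first.
  by rewrite -modnXm x_1 modnXm exp1n.
by rewrite sum_nat_const card_ord modnMmr muln1.
Qed.

Lemma expn_add1_mod w i : (1 + w) ^ i = 1 + i * w %[mod w ^ 2].
Proof.
elim: i => [|i IH]; first by rewrite mul0n.
by rewrite expnS mulnC -modnMml IH modnMml -[in RHS](modnMDl i); congr (_ %% _); nia.
Qed.

Lemma geom_sum_prime_mod q w : prime q -> odd q -> q %| w ->
  \sum_(i < q) (1 + w) ^ i = q %[mod q ^ 2].
Proof.
move=> q_pr q_odd q_w; have q_gt2 := odd_prime_gt2 q_odd q_pr.
rewrite -modn_summ (eq_bigr (fun i : 'I_q => (1 + i * w) %% q ^ 2)) => [|i _]; last first.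
  by rewrite -(modn_dvdm _ (dvdn_exp2r 2 q_w)) expn_add1_mod modn_dvdm // dvdn_exp2r.
rewrite modn_summ big_split /= sum_nat_const card_ord muln1 -big_distrl /=.
rewrite -(big_mkord xpredT id) -/(index_iota 0 q) bin2_sum -modnDmr.
have /eqP -> : (q ^ 2 %| 'C(q, 2) * w) by rewrite -mulnn dvdn_mul ?prime_dvd_bin.
by rewrite addn0.
Qed.

Lemma expn_gt1 x n : 1 < x -> 0 < n -> 1 < x ^ n.
Proof. by move=> x_gt1 n_gt0; rewrite (leq_trans x_gt1) // -{1}[x]expn1 leq_exp2l. Qed.

Section LiftingTheExponent.

Variable q : nat.
Hypotheses (q_pr : prime q) (q_odd : odd q).

Lemma logn_predn_expn_coprime x n : q %| x.-1 -> 0 < x -> coprime q n ->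
  logn q (x ^ n).-1 = logn q x.-1.
Proof.
move=> q_x x_gt0 q_n; rewrite predn_exp mulnC logn_Gauss // -coprime_modr.
rewrite geom_sum_mod ?coprime_modr //.
by apply/eqP; rewrite eqn_mod_dvd // subn1.
Qed.

Lemma logn_predn_expn_prime x : q %| x.-1 -> 1 < x ->
  logn q (x ^ q).-1 = (logn q x.-1).+1.
Proof.
move=> q_x x_gt1; have q_gt1 := prime_gt1 q_pr; have x_gt0 := ltnW x_gt1.
have x1_gt0 : 0 < x.-1 by rewrite -ltnS prednK.
set G := \sum_(i < q) x ^ i.
have G_mod : G %% q ^ 2 = q.
  rewrite /G -[x](prednK x_gt0) -add1n.
  by rewrite geom_sum_prime_mod // modn_small // -mulnn ltn_Pmull // ltnW.
rewrite predn_exp -/G.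
have -> : G = q * (G %/ q ^ 2 * q + 1).
  by rewrite {1}(divn_eq G (q ^ 2)) G_mod -mulnn; lia.
set t := _ + 1.
have t_coprime : coprime q t by rewrite -coprime_modr /t modnMDl modn_small ?coprimen1.
have t_gt0 : 0 < t by rewrite /t addn1.
have q_gt0 := prime_gt0 q_pr.
have qt_gt0 : 0 < q * t by rewrite muln_gt0 q_gt0.
rewrite (lognM _ x1_gt0 qt_gt0) (lognM _ q_gt0 t_gt0).
by rewrite (logn_prime _ q_pr) eqxx -[t]muln1 logn_Gauss // logn1 addn0 addn1.
Qed.

Lemma logn_predn_expn_pfactor x j : q %| x.-1 -> 1 < x ->
  logn q (x ^ (q ^ j)).-1 = logn q x.-1 + j.
Proof.
elim: j x => [|j IH] x q_x x_gt1; first by rewrite expn1 addn0.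
have xq_gt1 : 1 < x ^ q by rewrite expn_gt1 // prime_gt0.
rewrite expnS expnM IH ?(dvdn_trans q_x (dvdn_pred_predX x q)) //.
by rewrite logn_predn_expn_prime // addnS.
Qed.

Lemma logn_predn_expn x n : q %| x.-1 -> 1 < x -> 0 < n ->
  logn q (x ^ n).-1 = logn q x.-1 + logn q n.
Proof.
move=> q_x x_gt1 n_gt0; have [r q_r def_n] := pfactor_coprime q_pr n_gt0.
rewrite [in LHS]def_n mulnC expnM logn_predn_expn_coprime; first last.
- by [].
- by rewrite ltnW // expn_gt1 // expn_gt0 prime_gt0.
- exact: dvdn_trans q_x (dvdn_pred_predX x _).
by rewrite logn_predn_expn_pfactor.
Qed.

End LiftingTheExponent.

Definition ord2_defect q := logn q (2 ^ totient q).-1.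

Lemma pfactor_dvdn_pow2_predn q k t : prime q -> odd q -> 0 < t ->
  q ^ k %| (2 ^ t).-1 -> q ^ (k - ord2_defect q) <= t.
Proof.
move=> q_pr q_odd t_gt0 qk_dvd; have q_gt0 := prime_gt0 q_pr.
set x := 2 ^ totient q.
have x_gt1 : 1 < x by rewrite expn_gt1 // totient_gt0.
have q_x : q %| x.-1.
  rewrite -subn1 -eqn_mod_dvd ?(ltnW x_gt1) //; apply/eqP.
  by rewrite /x Euler_exp_totient // coprime2n.
have xt_gt1 : 1 < x ^ t by rewrite expn_gt1.
have : q ^ k %| (x ^ t).-1.
  by rewrite (dvdn_trans qk_dvd) // /x -expnM mulnC expnM dvdn_pred_predX.
rewrite pfactor_dvdn -?subn1 ?subn_gt0 // subn1 logn_predn_expn //.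
rewrite /ord2_defect -/x -leq_subLR => le_k.
by apply: leq_trans (dvdn_leq t_gt0 (pfactor_dvdnn q t)); rewrite leq_pexp2l.
Qed.

Lemma pow2_modn_inj q k b r1 r2 : prime q -> odd q ->
  r1 < q ^ (k - ord2_defect q) -> r2 < q ^ (k - ord2_defect q) ->
  2 ^ (b + r1) = 2 ^ (b + r2) %[mod q ^ k] -> r1 = r2.
Proof.
move=> q_pr q_odd.
wlog le_r12 : r1 r2 / r1 <= r2 => [hyp lt_r1 lt_r2 eq_mod|].
  by case: (leqP r1 r2) => [|/ltnW] le; [apply: hyp | apply/esym/hyp].
move=> _ lt_r2 /eqP; rewrite eq_sym eqn_mod_dvd ?leq_exp2l ?leq_add2l //.
rewrite -(subnKC le_r12) addnA expnD -{2}[2 ^ (b + r1)]muln1 -mulnBr subn1.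
rewrite Gauss_dvdr ?coprimeXl ?coprimeXr ?coprimen2 //.
case: (posnP (r2 - r1)) => [|t_gt0 /(pfactor_dvdn_pow2_predn _ _ _ q_pr q_odd t_gt0)]; lia.
Qed.

Lemma count_preim_inj_le (g : nat -> nat) (P : pred nat) s Q :
  uniq s -> {in s &, injective g} -> {in s, forall x, g x < Q} ->
  count (preim g P) s <= count P (iota 0 Q).
Proof.
move=> s_uniq g_inj g_lt; rewrite -count_map -!size_filter uniq_leq_size //.
  by rewrite filter_uniq // map_inj_in_uniq.
move=> y; rewrite !mem_filter => /andP[-> /mapP[x s_x ->]].
by rewrite mem_iota g_lt.
Qed.

Lemma count_pfactor_ndvd_bin_le q e a : prime q -> odd q -> 0 < a ->
  count (fun s => ~~ (q ^ e %| 'C(2 ^ s.+1, 2 ^ s))) (iota 0 a)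
    <= q * ((q./2).+1 ^ (ord2_defect q + trunc_log q a)
            * (ord2_defect q + trunc_log q a).+1 ^ e).
Proof.
move=> q_pr q_odd a_gt0; have q_gt1 := prime_gt1 q_pr; have q_gt0 := ltnW q_gt1.
set K := trunc_log q a; set k := ord2_defect q + K; pose P r := carries q r k < e.
have few_P s : ~~ (q ^ e %| 'C(2 ^ s.+1, 2 ^ s)) -> P (2 ^ s %% q ^ k).
  rewrite pfactor_dvdn ?bin_gt0 ?leq_exp2l // -ltnNge /P carries_mod //.
  by apply: leq_ltn_trans; rewrite expnS mul2n carries_le_logn_bin.
apply: leq_trans (sub_count few_P (iota 0 a)) _.
have le_a : a <= q * q ^ K by rewrite -expnS ltnW // trunc_log_ltn.
apply: leq_trans (_ : count (fun s => P (2 ^ s %% q ^ k)) (iota 0 (q * q ^ K)) <= _).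
  by rewrite -(subnKC le_a) iotaD count_cat leq_addr.
rewrite count_iota_blocks -[q in q * _]card_ord -sum_nat_const leq_sum // => d _.
have def_q : (q./2).*2.+1 = q by rewrite -[RHS]odd_double_half q_odd.
apply: leq_trans (few_carries_le _ k e); rewrite /few_carries def_q.
apply: (count_preim_inj_le (fun r => 2 ^ (d * q ^ K + r) %% q ^ k)) (iota_uniq 0 _) _ _.
- move=> r1 r2; rewrite !mem_iota /= => lt_r1 lt_r2.
  by apply: pow2_modn_inj; rewrite // /k addKn.
- by move=> r _; rewrite ltn_pmod ?expn_gt0 ?q_gt0.
Qed.

Lemma count_le_sum_count (I : Type) (l : seq I) (a : pred nat) (b : I -> pred nat) s :
  (forall x, a x -> has (fun i => b i x) l) ->
  count a s <= \sum_(i <- l) count (b i) s.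
Proof.
move=> a_cover; elim: s => [|x s IH] /=; first by rewrite big1.
rewrite big_split /= leq_add //; case: (boolP (a x)) => // /a_cover b_x.
by rewrite lt0n sum_nat_seq_neq0; apply: sub_has b_x => i /=; case: (b i x).
Qed.

Lemma Cm_le_sum_primes m a : 0 < m ->
  Cm m a <= \sum_(q <- primes m)
              count (fun s => ~~ (q ^ logn q m %| 'C(2 ^ s.+1, 2 ^ s))) (iota 0 a).
Proof.
move=> m_gt0; apply: count_le_sum_count => s m_ndvd.
rewrite -[has _ _]negbK -all_predC; apply: contra m_ndvd => /allP all_dvd.
by apply/dvdn_partP => // q /all_dvd /=; rewrite p_part negbK.
Qed.

Local Open Scope R_scope.

Lemma INR_muln x y : INR (x * y)%N = INR x * INR y.
Proof. by rewrite -multE mult_INR. Qed.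

Lemma INR_expn x n : INR (x ^ n)%N = INR x ^ n.
Proof. by elim: n => [|n IH] //=; rewrite expnS INR_muln IH. Qed.

Lemma INR_sum_le (I : eqType) (l : seq I) (f c : I -> nat) (y : R) :
  (forall i, i \in l -> INR (f i) <= INR (c i) * y) ->
  INR (\sum_(i <- l) f i)%N <= INR (\sum_(i <- l) c i)%N * y.
Proof.
elim: l => [|i l IH] le_fc; first by rewrite !big_nil /=; lra.
rewrite !big_cons -!plusE !plus_INR Rmult_plus_distr_r.
apply: Rplus_le_compat; first by apply: le_fc; rewrite mem_head.
by apply: IH => j l_j; apply: le_fc; rewrite inE l_j orbT.
Qed.

Lemma exp_le x y : x <= y -> exp x <= exp y.
Proof. by case/Rle_lt_or_eq_dec => [/exp_increasing/Rlt_le|->]; [|apply: Rle_refl]. Qed.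

Lemma ln_le_sub1 t : 0 < t -> ln t <= t - 1.
Proof. by move=> t_gt0; have := exp_ineq1_le (ln t); rewrite exp_ln //; lra. Qed.

(* Weighted AM-GM, from ln u <= u - 1 at u = z/w and u = 1/w. *)
Lemma Rpower_le_affine z al : 0 < z -> 0 <= al <= 1 -> Rpower z al <= al * z + 1 - al.
Proof.
move=> z_gt0 [al_ge0 al_le1]; set w := al * z + 1 - al.
have w_gt0 : 0 < w by rewrite /w; nra.
have le_z := ln_le_sub1 _ (Rdiv_lt_0_compat _ _ z_gt0 w_gt0).
have le_1 := ln_le_sub1 _ (Rdiv_lt_0_compat _ _ Rlt_0_1 w_gt0).
rewrite ln_div // in le_z; rewrite ln_div ?ln_1 // in le_1; try lra.
have sum0 : al * (z / w - 1) + (1 - al) * (1 / w - 1) = 0.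
  by rewrite /w; field; apply: Rgt_not_eq; exact: w_gt0.
rewrite -(exp_ln w) // /Rpower; apply: exp_le; nra.
Qed.

Lemma Rpower_midpoint_le y al : 0 < y -> 0 <= al <= 1 ->
  (Rpower y al + 1) / 2 <= Rpower ((y + 1) / 2) al.
Proof.
move=> y_gt0 al01; set M := (y + 1) / 2; have M_gt0 : 0 < M by rewrite /M; lra.
have le_y := Rpower_le_affine _ _ (Rdiv_lt_0_compat _ _ y_gt0 M_gt0) al01.
have le_1 := Rpower_le_affine _ _ (Rdiv_lt_0_compat _ _ Rlt_0_1 M_gt0) al01.
have split_pow u : 0 < u -> Rpower u al = Rpower (u / M) al * Rpower M al.
  move=> u_gt0; rewrite Rpower_mult_distr //; last exact: Rdiv_lt_0_compat.
  by replace (u / M * M) with u by (field; lra).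
have -> : Rpower y al + 1 = (Rpower (y / M) al + Rpower (1 / M) al) * Rpower M al.
  rewrite Rmult_plus_distr_r -split_pow // -split_pow; last lra.
  by rewrite /Rpower ln_1 Rmult_0_r exp_0.
have sum_le : al * (y / M) + al * (1 / M) = 2 * al by rewrite /M; field; lra.
have := exp_pos (al * ln M); rewrite -/(Rpower M al); nra.
Qed.

Lemma ln_half_succ_div_ln_le x y : 1 < x -> x <= y ->
  ln ((x + 1) / 2) / ln x <= ln ((y + 1) / 2) / ln y.
Proof.
move=> x_gt1 le_xy.
have lnx_gt0 : 0 < ln x by rewrite -ln_1; apply: ln_increasing; lra.
have lnxy : ln x <= ln y by apply: ln_le; lra.
have lny_gt0 : 0 < ln y by lra.
set al := ln x / ln y.
have al01 : 0 <= al <= 1.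
  split; first by apply: Rdiv_le_0_compat; lra.
  by apply/(Rdiv_le_1 _ _ lny_gt0).
have x_pow : Rpower y al = x.
  rewrite /Rpower /al (_ : ln x / ln y * ln y = ln x); last by field; lra.
  by rewrite exp_ln //; lra.
have y_gt0 : 0 < y by lra.
have := Rpower_midpoint_le _ _ y_gt0 al01; rewrite x_pow => /ln_le.
rewrite ln_Rpower => le_ln; have {}le_ln := le_ln ltac:(lra).
apply/(Rmult_le_reg_r (ln x)) => //.
have -> : ln ((x + 1) / 2) / ln x * ln x = ln ((x + 1) / 2) by field; lra.
by apply: (Rle_trans _ _ _ le_ln); apply: Req_le; rewrite /al; field; lra.
Qed.

Lemma expo_le q p : (1 < q)%N -> (q <= p)%N -> expo q <= expo p.
Proof.
move=> q_gt1 le_qp; apply: ln_half_succ_div_ln_le; last exact/le_INR/ssrnat.leP.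
by have := lt_INR 1 q (ssrnat.ltP q_gt1).
Qed.

Lemma ln_le_of_pow_le q K a : (0 < q)%N -> (q ^ K <= a)%N ->
  INR K * ln (INR q) <= ln (INR a).
Proof.
move=> q_gt0 le_qKa; have q_pos : 0 < INR q by apply/lt_0_INR/ssrnat.ltP.
rewrite -ln_pow //; apply: ln_le; first exact: pow_lt.
by rewrite -INR_expn; apply/le_INR/ssrnat.leP.
Qed.

Lemma pow_half_succ_le_Rpower q K a : odd q -> (1 < q)%N -> (q ^ K <= a)%N ->
  INR ((q./2).+1 ^ K) <= Rpower (INR a) (expo q).
Proof.
move=> q_odd q_gt1 le_qKa.
have lnq_gt0 : 0 < ln (INR q).
  by rewrite -ln_1; apply: ln_increasing; [lra | apply: (lt_INR 1 q); apply/ssrnat.ltP].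
have half_q : INR (q./2).+1 = (INR q + 1) / 2.
  rewrite -[in RHS](odd_double_half q) q_odd -mul2n -plusE -multE plus_INR mult_INR S_INR /=.
  lra.
have expo_ge0 : 0 <= expo q.
  apply: Rdiv_le_0_compat => //; rewrite -half_q -ln_1; apply: ln_le; first lra.
  by apply: (le_INR 1); apply/ssrnat.leP.
rewrite INR_expn half_q -Rpower_pow; last by have := pos_INR q; lra.
apply: exp_le; apply: (Rle_trans _ (expo q * (INR K * ln (INR q)))).
  by apply: Req_le; rewrite /expo (_ : R1 = 1) //; field; lra.
by apply: Rmult_le_compat_l => //; apply: ln_le_of_pow_le (ltnW q_gt1) le_qKa.
Qed.

Lemma trunc_log_succ_le_ln q a : (3 <= q)%N -> (0 < a)%N ->
  INR (trunc_log q a).+1 <= ln (INR a) + 1.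
Proof.
move=> q_ge3 a_gt0; have q_gt1 : (1 < q)%N by apply: leq_trans q_ge3.
have lnq_ge1 : 1 <= ln (INR q).
  rewrite -(ln_exp 1); apply: ln_le; first exact: exp_pos.
  by have := le_INR 3 q (ssrnat.leP q_ge3); have := exp_le_3; simpl; lra.
have := ln_le_of_pow_le _ _ _ (ltnW q_gt1) (trunc_logP q_gt1 a_gt0).
by rewrite S_INR; have := pos_INR (trunc_log q a); nra.
Qed.

Lemma Cm_le_polylog_Rpower m : odd m -> (1 < m)%N ->
  exists C : R, forall a : nat, (0 < a)%N ->
    INR (Cm m a) <= C * ((ln (INR a) + 1) ^ m * Rpower (INR a) (expo (gpd m))).
Proof.
move=> m_odd m_gt1; have m_gt0 := ltnW m_gt1.
pose C q := (q * (q./2).+1 ^ ord2_defect q * (ord2_defect q).+1 ^ m)%N.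
exists (INR (\sum_(q <- primes m) C q)) => a a_gt0.
apply: Rle_trans (le_INR _ _ (ssrnat.leP (Cm_le_sum_primes m a m_gt0))) _.
apply: INR_sum_le => q m_q; have := m_q; rewrite mem_primes => /and3P[q_pr _ q_m].
have q_odd := dvdn_odd q_m m_odd; have q_ge3 := odd_prime_gt2 q_odd q_pr.
set c := ord2_defect q; set K := trunc_log q a; set e := logn q m.
have le_em : (e <= m)%N by apply/ltnW/ltn_logl.
have e_gt0 : (0 < e)%N by rewrite logn_gt0.
have le_count : (count (fun s => ~~ (q ^ e %| 'C(2 ^ s.+1, 2 ^ s))) (iota 0 a)
                 <= C q * ((q./2).+1 ^ K * K.+1 ^ m))%N.
  apply: leq_trans (count_pfactor_ndvd_bin_le _ e _ q_pr q_odd a_gt0) _.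
  have le_succ : ((c + K).+1 ^ e <= c.+1 ^ m * K.+1 ^ m)%N.
    apply: leq_trans (_ : _ <= (c.+1 * K.+1) ^ e)%N _; first by rewrite leq_exp2r //; nia.
    by rewrite expnMn leq_mul // leq_pexp2l.
  rewrite /C expnD -/c -/K; nia.
apply: Rle_trans (le_INR _ _ (ssrnat.leP le_count)) _.
rewrite INR_muln; apply: Rmult_le_compat_l; first exact: pos_INR.
rewrite INR_muln Rmult_comm; apply: Rmult_le_compat; try exact: pos_INR.
- rewrite INR_expn; apply: pow_incr; split; [exact: pos_INR | exact: trunc_log_succ_le_ln].
- have q_gt1 := ltnW q_ge3.
  apply: Rle_trans (pow_half_succ_le_Rpower _ _ _ q_odd q_gt1 (trunc_logP q_gt1 a_gt0)) _.
  apply: Rle_Rpower; first by apply: (le_INR 1); apply/ssrnat.leP.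
  exact/expo_le/max_pdiv_max.
Qed.

Lemma pow_le_exp d eps L n : 0 < d <= 1 -> d * INR n <= eps -> 0 <= L ->
  (d * (L + 1)) ^ n <= exp (eps * L).
Proof.
move=> [d_gt0 d_le1] le_eps L_ge0.
have le_exp := exp_ineq1_le (d * L).
apply: Rle_trans (_ : exp (d * L) ^ n <= _); first by apply: pow_incr; split; nra.
rewrite -Rpower_pow; last exact: exp_pos.
rewrite /Rpower ln_exp; apply: exp_le; have := pos_INR n; nra.
Qed.

Lemma is_lim_seq_inv_ln_succ :
  is_lim_seq (fun a => / (ln (INR a) + 1)) 0.
Proof.
have lim_ln : is_lim_seq (fun a => ln (INR a) + 1) p_infty.
  apply: (is_lim_seq_plus _ _ p_infty 1 p_infty); last by [].
  - apply: (is_lim_comp_seq ln INR p_infty p_infty is_lim_ln_p) => //.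
      by exists 0%nat.
    exact: is_lim_seq_INR.
  - exact: is_lim_seq_const.
exact: (is_lim_seq_inv _ _ lim_ln).
Qed.

Lemma is_lim_seq_polylog_div_Rpower n eps : 0 < eps ->
  is_lim_seq (fun a => (ln (INR a) + 1) ^ n / Rpower (INR a) eps) 0.
Proof.
move=> eps_gt0; set d := Rmin (eps / INR n.+1) 1.
have n1_gt0 : 0 < INR n.+1 by apply: lt_0_INR; lia.
have d_gt0 : 0 < d by apply: Rmin_pos; [apply: Rdiv_lt_0_compat | lra].
have d_le1 : d <= 1 by apply: Rmin_r.
have le_eps : d * INR n.+1 <= eps.
  have := Rmin_l (eps / INR n.+1) 1; rewrite -/d => le_d.
  apply: (Rmult_le_reg_r (/ INR n.+1)); first exact: Rinv_0_lt_compat.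
  by rewrite Rmult_assoc Rinv_r; lra.
apply: (is_lim_seq_le_le_loc (fun _ => 0) _ (fun a => / d ^ n.+1 * / (ln (INR a) + 1))).
- exists 1%nat => a a_ge1; set L := ln (INR a).
  have L_ge0 : 0 <= L by rewrite /L -ln_1; apply: ln_le; [lra | apply: (le_INR 1)].
  have := pow_le_exp _ _ _ n.+1 (conj d_gt0 d_le1) le_eps L_ge0.
  rewrite /Rpower -/L => le_exp; have dn_gt0 : 0 < d ^ n.+1 by apply: pow_lt.
  have Ln_gt0 : 0 < (L + 1) ^ n by apply: pow_lt; lra.
  split; first by apply: Rdiv_le_0_compat; [lra | apply: exp_pos].
  apply: (Rle_trans _ ((L + 1) ^ n / (d * (L + 1)) ^ n.+1)).
    apply: Rmult_le_compat_l; first lra.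
    by apply: Rinv_le_contravar => //; apply/pow_lt/Rmult_lt_0_compat; lra.
  apply: Req_le; rewrite Rpow_mult_distr /=; field.
  by have := pow_lt _ n d_gt0; lra.
- exact: is_lim_seq_const.
- by have := is_lim_seq_scal_l _ (/ d ^ n.+1) _ is_lim_seq_inv_ln_succ; rewrite /= Rmult_0_r.
Qed.

Theorem theorem3p2 (m : nat) (Hodd : odd m) (Hm : (1 < m)%N)
  (eps : R) (Heps : 0 < eps) :
  is_lim_seq
    (fun a : nat => Rdiv (INR (Cm m a)) (Rpower (INR a) (Rplus (expo (gpd m)) eps)))
    (Rbar.Finite 0).
Proof.
have [C Cm_le] := Cm_le_polylog_Rpower m Hodd Hm.
set E := expo (gpd m).
apply: (is_lim_seq_le_le_loc (fun _ => 0) _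
          (fun a => C * ((ln (INR a) + 1) ^ m / Rpower (INR a) eps))).
- exists 1%nat => a /ssrnat.leP a_gt0; have := Cm_le a a_gt0.
  rewrite Rpower_plus; have := exp_pos (E * ln (INR a)); have := exp_pos (eps * ln (INR a)).
  rewrite -!/(Rpower _ _) => aE_gt0 aeps_gt0 le_Cm.
  split; first by apply: Rdiv_le_0_compat; [apply: pos_INR | nra].
  apply: (Rle_trans _ (C * ((ln (INR a) + 1) ^ m * Rpower (INR a) E)
                       / (Rpower (INR a) E * Rpower (INR a) eps))).
    by apply: Rmult_le_compat_r => //; apply/Rlt_le/Rinv_0_lt_compat; nra.
  by apply: Req_le; field; lra.
- exact: is_lim_seq_const.
- have := is_lim_seq_scal_l _ C _ (is_lim_seq_polylog_div_Rpower m _ Heps).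
  by rewrite /= Rmult_0_r.
Qed.
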